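(* Let $p$ be a prime, $k=\mathbb{F}_p$, and $V$ a $k$-vector space. Then the map $\Psi:\widehat{V}\to V^{**}$, $\Psi((x_{\mathbf{v}})_{\mathbf{v}})=\big(f\mapsto x_{\mathbf{v}_f}\big)$, is an isomorphism, and $\Psi\circ\widehat{\pi}=i$, where $\widehat{\pi}:V\to\widehat V$ is the profinite projection and $i:V\to V^{**}$ is the canonical map $i(v)(f)=f(v)$.
   Context: A finite approximation of a group $G$ is a pair $\mathbf{v}=(F_{\mathbf{v}},\varphi_{\mathbf{v}})$ with $F_{\mathbf{v}}$ a finite group and $\varphi_{\mathbf{v}}:G\to F_{\mathbf{v}}$ a group homomorphism; a morphism $f:\mathbf{v}\to\mathbf{v}'$ is a group homomorphism $f:F_{\mathbf{v}}\to F_{\mathbf{v}'}$ with $f\circ\varphi_{\mathbf{v}}=\varphi_{\mathbf{v}'}$. The profinite completion of $G$ is $\widehat{G}=\{(g_{\mathbf{v}})_{\mathbf{v}}\in\prod_{\mathbf{v}}F_{\mathbf{v}} : \psi(g_{\mathbf{v}})=g_{\mathbf{w}} \text{ for every morphism } \psi:\mathbf{v}\to\mathbf{w}\}$, the product over all finite approximations of $G$ (set-theoretic size issues ignored), with componentwise group law, and the profinite projection is $\widehat{\pi}:G\to\widehat G$, $g\mapsto(\varphi_{\mathbf{v}}(g))_{\mathbf{v}}$. $\widehat{V}$ denotes the profinite completion of the additive group of $V$. For $f\in V^*$, $\mathbf{v}_f=(k,f)$ is the finite approximation of $V$ into the additive group of $k$ given by $f$; for $\mathbf{x}\in\widehat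 V$ the map $f\mapsto x_{\mathbf{v}_f}$ is $k$-linear, so $\Psi$ takes values in $V^{**}$. *)

From HB Require Import structures.
From mathcomp Require Import all_boot all_order all_algebra all_fingroup.
Set Implicit Arguments. Unset Strict Implicit. Unset Printing Implicit Defensive.
Import GRing.Theory.
Local Open Scope ring_scope.

Record approx (V : zmodType) := Approx {
  aF : finGroupType;
  aphi : V -> aF;
  aphi_morph : forall x y : V, aphi (x + y) = (aphi x * aphi y)%g }.

Definition ghom (G H : finGroupType) (f : G -> H) :=
  forall a b : G, f (a * b)%g = (f a * f b)%g.

Definition amorph (V : zmodType) (v w : approx V) (f : aF v -> aF w) :=
  ghom f /\ (forall x : V, f (aphi v x) = aphi w x).

(* compatible families: the elements of the profinite completion *)
Definition compat (V : zmodType) (x : forall v : approx V, aF v) :=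
  forall (v w : approx V) (f : aF v -> aF w), amorph f -> f (x v) = x w.

Definition profin (V : zmodType) := {x : forall v : approx V, aF v | compat x}.

Lemma compat_mul (V : zmodType) (x y : profin V) :
  compat (fun v => (proj1_sig x v * proj1_sig y v)%g).
Proof.
move=> v w f [hf hc]; rewrite hf.
by rewrite (proj2_sig x _ _ _ (conj hf hc)) (proj2_sig y _ _ _ (conj hf hc)).
Qed.

Definition profin_mul (V : zmodType) (x y : profin V) : profin V :=
  exist _ _ (compat_mul x y).

Lemma compat_pi (V : zmodType) (a : V) : compat (fun v => aphi v a).
Proof. by move=> v w f [_ hc]. Qed.

Definition profin_pi (V : zmodType) (a : V) : profin V :=
  exist _ _ (compat_pi a).

Definition dual (k : fieldType) (V : lmodType k) :=
  {f : V -> k | forall (c : k) (x y : V), f (c *: x + y) = c * f x + f y}.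

(* linear functionals on V^* (elements of V^{**}); the vector space
   operations on V^* are pointwise. *)
Definition bidual_lin (k : fieldType) (V : lmodType k) (phi : dual V -> k) :=
  forall (c : k) (f g h : dual V),
    (forall v, proj1_sig h v = c * proj1_sig f v + proj1_sig g v) ->
    phi h = c * phi f + phi g.

Definition ev (k : fieldType) (V : lmodType k) (v : V) : dual V -> k :=
  fun f => proj1_sig f v.

(* v_f = (k, f): the finite approximation given by f in V^*, with k viewed
   as its (finite) additive group. *)
Section Vf.
Variable p : nat.
Variable V : lmodType 'F_p.

Lemma dual_morph (f : dual V) (x y : V) :
  proj1_sig f (x + y) = (proj1_sig f x * proj1_sig f y)%g.
Proof.
by have := proj2_sig f 1 x y; rewrite scale1r mul1r.
Qed.

Definition vf (f : dual V) : approx V := @Approx V 'F_p (proj1_sig f) (dual_morph f).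

Definition Psi (x : profin V) : dual V -> 'F_p := fun f => proj1_sig x (vf f).
End Vf.

From HB Require Import structures.
From mathcomp Require Import all_boot all_order all_algebra all_fingroup.
From mathcomp Require Import abelian mxabelem boolp.
Set Implicit Arguments. Unset Strict Implicit. Unset Printing Implicit Defensive.
Import GRing.Theory.
Local Open Scope ring_scope.

(* A finite approximation v factors through its image Im v = phi_v(V), which is
   killed by p and hence is an elementary abelian p-group, i.e. a finite
   dimensional F_p-vector space. Additive maps g : Im v -> F_p separate points,
   and g \o phi_v is a functional on V; compatibility of x along the morphisms
   Im v -> v and Im v -> v_(g \o phi_v) gives g(x_v) = Psi(x)(g \o phi_v).
   Hence x is determined by Psi x, and conversely, for phi in V^**, x_v can be
   defined as the point of Im v whose coordinates are the values of phi on the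
   coordinate functionals. Linearity of Psi x comes from compatibility along the
   approximation V -> F_p * F_p, v |-> (f v, g v). *)

Section ProfiniteDual.
Variables (p : nat) (V : lmodType 'F_p).
Hypothesis p_pr : prime p.
Implicit Types (v w : approx V) (f g : dual V).

Lemma scaler_Fp (c : 'F_p) (x : V) : c *: x = x *+ c.
Proof. by rewrite -scaler_nat natr_Zp. Qed.

Lemma aphi0 v : aphi v 0 = 1%g.
Proof.
apply: (@mulgI _ (aphi v 0)).
by rewrite -aphi_morph addr0 mulg1.
Qed.

Lemma aphiMn v (x : V) n : aphi v (x *+ n) = (aphi v x ^+ n)%g.
Proof.
elim: n => [|n IHn]; first by rewrite mulr0n aphi0.
by rewrite mulrS aphi_morph IHn expgS.
Qed.

Definition approx_img_set v : {set aF v} := [set z | `[< exists a, aphi v a = z >]].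

Lemma approx_img_group v : group_set (approx_img_set v).
Proof.
apply/group_setP; split; first by rewrite inE; apply/asboolP; exists 0; apply: aphi0.
move=> x y; rewrite !inE => /asboolP[a <-] /asboolP[b <-].
by apply/asboolP; exists (a + b); apply: aphi_morph.
Qed.

Canonical approx_img v := Group (approx_img_group v).

Lemma approx_imgP v z : reflect (exists a, aphi v a = z) (z \in approx_img v).
Proof. by rewrite inE; apply: asboolP. Qed.

Lemma mem_approx_img v a : aphi v a \in approx_img v.
Proof. by apply/approx_imgP; exists a. Qed.

Lemma amorph_img v w (h : aF v -> aF w) z :
  amorph h -> z \in approx_img v -> h z \in approx_img w.
Proof. by move=> [_ hphi] /approx_imgP[a <-]; rewrite hphi mem_approx_img. Qed.

Lemma approx_img_abelem v : (p.-abelem (approx_img v))%g.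
Proof.
apply/abelemP => //; split.
  apply/centsP => _ /approx_imgP[a <-] _ /approx_imgP[b <-].
  by rewrite /commute -!aphi_morph addrC.
move=> _ /approx_imgP[a <-].
by rewrite -aphiMn -scaler_nat (GRing.pcharf0 (pchar_Fp p_pr)) scale0r aphi0.
Qed.

Lemma img_approx_morph v (x y : V) :
  subg (approx_img v) (aphi v (x + y))
  = (subg (approx_img v) (aphi v x) * subg (approx_img v) (aphi v y))%g.
Proof. by rewrite aphi_morph subgM ?mem_approx_img. Qed.

Definition img_approx v : approx V := Approx (@img_approx_morph v).

Lemma sgval_amorph v : amorph (v := img_approx v) (w := v) sgval.
Proof. by split=> // a /=; rewrite subgK ?mem_approx_img. Qed.

Lemma profin_in_img (x : profin V) v : proj1_sig x v \in approx_img v.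
Proof. by rewrite -(proj2_sig x _ _ _ (sgval_amorph v)) subgP. Qed.

Definition img_additive v (g : aF v -> 'F_p) :=
  {in approx_img v &, {morph g : a b / (a * b)%g >-> a + b}}.

Lemma img_additive1 v (g : aF v -> 'F_p) : img_additive g -> g 1%g = 0.
Proof.
move=> gA; apply: (@addrI _ (g 1%g)).
by rewrite -gA ?group1 // mulg1 addr0.
Qed.

Lemma img_additiveX v (g : aF v -> 'F_p) z n :
  img_additive g -> z \in approx_img v -> g (z ^+ n)%g = g z *+ n.
Proof.
move=> gA zI; elim: n => [|n IHn]; first by rewrite expg0 mulr0n img_additive1.
by rewrite expgS gA ?groupX // IHn mulrS.
Qed.

Lemma pullback_lin v (g : aF v -> 'F_p) (gA : img_additive g) (c : 'F_p) (x y : V) :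
  g (aphi v (c *: x + y)) = c * g (aphi v x) + g (aphi v y).
Proof.
rewrite aphi_morph gA ?mem_approx_img // scaler_Fp aphiMn.
by rewrite img_additiveX ?mem_approx_img // -mulr_natl natr_Zp.
Qed.

Definition pullback v (g : aF v -> 'F_p) (gA : img_additive g) : dual V :=
  exist _ (g \o aphi v) (pullback_lin gA).

Lemma Psi_pullback (x : profin V) v (g : aF v -> 'F_p) (gA : img_additive g) :
  g (proj1_sig x v) = Psi x (pullback gA).
Proof.
have gm : amorph (v := img_approx v) (w := vf (pullback gA)) (g \o sgval).
  by split=> [a b|a] /=; [apply: gA; apply: subgP | rewrite subgK ?mem_approx_img].
by rewrite /Psi -(proj2_sig x _ _ _ gm) -(proj2_sig x _ _ _ (sgval_amorph v)).
Qed.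

(* abelem_rV needs a nontrivial group, so a trivial image is always treated
   separately. *)
Section Coordinates.
Variable v : approx V.
Hypothesis img_ntriv : approx_img v != 1%g :> {set aF v}.

Let abE := approx_img_abelem v.
Local Notation coord z := (abelem_rV abE img_ntriv z).
Local Notation point r := (rVabelem abE img_ntriv r).

Lemma img_additive_coord i : img_additive (fun z => coord z 0 i).
Proof. by move=> a b aI bI; rewrite abelem_rV_M // mxE. Qed.

Lemma img_additive_expand (g : aF v -> 'F_p) z :
  img_additive g -> z \in approx_img v ->
  g z = \sum_i coord z 0 i * g (point (delta_mx 0 i)).
Proof.
move=> gA zI; pose h r := g (point r).
have hD : {morph h : r s / r + s} by move=> r s; rewrite /h rVabelemD gA ?mem_rVabelem.
have h0 : h 0 = 0 by apply: (@addrI _ (h 0)); rewrite -hD !addr0.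
have hZ c r : h (c *: r) = c * h r.
  by rewrite /h rVabelemZ img_additiveX ?mem_rVabelem // -mulr_natl natr_Zp.
have -> : g z = h (coord z) by rewrite /h abelem_rV_K.
by rewrite {1}(row_sum_delta (coord z)) (big_morph h hD h0); apply: eq_bigr => i _; rewrite hZ.
Qed.

End Coordinates.

Lemma img_additive_sep v z z' : z \in approx_img v -> z' \in approx_img v ->
  (forall g : aF v -> 'F_p, img_additive g -> g z = g z') -> z = z'.
Proof.
move=> zI z'I gz.
have [img1|img_ntriv] := eqVneq (approx_img v : {set aF v}) 1%g.
  by move: zI z'I; rewrite img1 => /set1gP -> /set1gP ->.
apply: (abelem_rV_inj (abelE := approx_img_abelem v) (ntE := img_ntriv) zI z'I).
apply/rowP => i; exact: (gz _ (img_additive_coord img_ntriv i)).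
Qed.

Section Bidual.
Variable phi : dual V -> 'F_p.
Hypothesis phi_lin : bidual_lin phi.

Lemma bidual_ext f g : (forall a, proj1_sig f a = proj1_sig g a) -> phi f = phi g.
Proof.
move=> fg; rewrite (@phi_lin 0 f g f) ?mul0r ?add0r //.
by move=> a; rewrite mul0r add0r.
Qed.

Lemma bidual_eq0 f : (forall a, proj1_sig f a = 0) -> phi f = 0.
Proof.
move=> f0; apply: (@addrI _ (phi f)); rewrite addr0 -{1}(mul1r (phi f)).
by rewrite -(@phi_lin 1 f f f) // => a; rewrite f0 mulr0 addr0.
Qed.

Lemma dual_comb_lin I (r : seq I) (k : I -> 'F_p) (fs : I -> dual V) (c : 'F_p) (x y : V) :
  \sum_(i <- r) k i * proj1_sig (fs i) (c *: x + y) =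
  c * \sum_(i <- r) k i * proj1_sig (fs i) x + \sum_(i <- r) k i * proj1_sig (fs i) y.
Proof.
rewrite mulr_sumr -big_split; apply: eq_bigr => i _.
by rewrite (proj2_sig (fs i)) mulrDr mulrCA.
Qed.

Definition dual_comb I (r : seq I) (k : I -> 'F_p) (fs : I -> dual V) : dual V :=
  exist _ (fun a => \sum_(i <- r) k i * proj1_sig (fs i) a) (dual_comb_lin r k fs).

Lemma bidual_sum I (r : seq I) (k : I -> 'F_p) (fs : I -> dual V) f :
  (forall a, proj1_sig f a = \sum_(i <- r) k i * proj1_sig (fs i) a) ->
  phi f = \sum_(i <- r) k i * phi (fs i).
Proof.
elim: r f => [|i r IHr] f fE.
  by rewrite big_nil; apply: bidual_eq0 => a; rewrite fE big_nil.
rewrite big_cons -(IHr (dual_comb r k fs)) //.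
by apply: phi_lin => a; rewrite fE big_cons.
Qed.

Lemma bidual_img_point v : exists2 z, z \in approx_img v &
  forall (g : aF v -> 'F_p) (gA : img_additive g), g z = phi (pullback gA).
Proof.
have [img1|img_ntriv] := eqVneq (approx_img v : {set aF v}) 1%g.
  exists 1%g => [|g gA]; first exact: group1.
  rewrite img_additive1 // bidual_eq0 // => a /=.
  by move: (mem_approx_img v a); rewrite img1 => /set1gP ->; apply: img_additive1.
pose abE := approx_img_abelem v.
pose cs i := pullback (img_additive_coord img_ntriv i).
exists (rVabelem abE img_ntriv (\row_i phi (cs i))) => [|g gA].
  exact: mem_rVabelem.
rewrite (img_additive_expand img_ntriv gA) ?mem_rVabelem // rVabelemK.
rewrite (bidual_sum (r := index_enum _) (fs := cs)
  (k := fun i => g (rVabelem abE img_ntriv (delta_mx 0 i)))) => [|a].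
  by apply: eq_bigr => i _; rewrite mxE mulrC.
rewrite /= (img_additive_expand img_ntriv gA) ?mem_approx_img //.
by apply: eq_bigr => i _; rewrite mulrC.
Qed.

End Bidual.

Lemma vf_pair_morph f g (x y : V) :
  ((proj1_sig f (x + y), proj1_sig g (x + y)) : 'F_p * 'F_p)
  = ((proj1_sig f x, proj1_sig g x) * (proj1_sig f y, proj1_sig g y))%g.
Proof. by rewrite !dual_morph. Qed.

Definition vf_pair f g : approx V := Approx (vf_pair_morph f g).

Lemma Psi_lin (x : profin V) : bidual_lin (Psi x).
Proof.
move=> c f g h hE.
have m1 : amorph (v := vf_pair f g) (w := vf f) fst by [].
have m2 : amorph (v := vf_pair f g) (w := vf g) snd by [].
have m3 : amorph (v := vf_pair f g) (w := vf h) (fun u => c * u.1 + u.2).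
  split=> [[a1 a2] [b1 b2]|a] /=; last by rewrite hE.
  by rewrite mulrDr addrACA.
by rewrite /Psi -(proj2_sig x _ _ _ m1) -(proj2_sig x _ _ _ m2) -(proj2_sig x _ _ _ m3).
Qed.

Lemma Psi_inj (x y : profin V) : Psi x = Psi y -> x = y.
Proof.
move=> xy; apply: eq_sig_hprop => [? ? ?|]; first exact: Prop_irrelevance.
apply: functional_extensionality_dep => v.
apply: (img_additive_sep (profin_in_img x v) (profin_in_img y v)) => g gA.
by rewrite !(Psi_pullback _ gA) xy.
Qed.

Lemma Psi_onto (phi : dual V -> 'F_p) : bidual_lin phi -> exists x : profin V, Psi x = phi.
Proof.
move=> phi_lin.
pose xs v := s2val (cid2 (bidual_img_point phi_lin v)).
have xsI v : xs v \in approx_img v := s2valP (cid2 (bidual_img_point phi_lin v)).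
have xsE v : forall (g : aF v -> 'F_p) (gA : img_additive g), g (xs v) = phi (pullback gA)
  := s2valP' (cid2 (bidual_img_point phi_lin v)).
have xs_compat : compat xs.
  move=> v w h hm; apply: (img_additive_sep (amorph_img hm (xsI v)) (xsI w)) => g gA.
  have ghA : img_additive (g \o h).
    by move=> a b aI bI; rewrite /= hm.1 gA ?(amorph_img hm).
  rewrite -[g (h _)]/((g \o h) (xs v)) (xsE _ _ ghA) xsE.
  by apply: bidual_ext => // a /=; rewrite hm.2.
exists (exist _ xs xs_compat); apply: functional_extensionality_dep => f.
have idA : img_additive (v := vf f) id by [].
by rewrite /Psi /= -[xs _]/(id (xs (vf f))) (xsE _ _ idA); apply: bidual_ext.
Qed.

End ProfiniteDual.

Theorem mainTheorem4 (p : nat) (V : lmodType 'F_p) :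
  prime p ->
  (* Psi takes values in V^{**} *)
  (forall x : profin V, bidual_lin (Psi x)) /\
  (* Psi is a group homomorphism *)
  (forall x y : profin V, Psi (profin_mul x y) = (fun f => Psi x f + Psi y f)) /\
  (* Psi is injective *)
  (forall x y : profin V, Psi x = Psi y -> x = y) /\
  (* Psi is onto V^{**} *)
  (forall phi : dual V -> 'F_p, bidual_lin phi -> exists x : profin V, Psi x = phi) /\
  (* Psi \o pi_hat = i *)
  (forall v : V, Psi (profin_pi v) = ev v).
Proof.
move=> p_pr; split; first exact: Psi_lin.
split; first by [].
split; first exact: Psi_inj.
split; first exact: Psi_onto.
by [].
Qed.
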